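(* Let $H$ be a separable complex Hilbert space, let $\{v_j\}_{j\in\mathbb N}$ be an orthonormal basis of $H$, let $\{w_j\}_{j\in\mathbb N}$ be a set of unit vectors in $H$, and fix $N\ge 1$. Let $\mathcal B_N=\{w_j\}_{1\le j\le N}\cup\{v_j\}_{j\ge N+1}$, let $H_N'=\operatorname{span}\{v_1,\dots,v_N\}$, and let $p_N'$ denote the orthogonal projection of $H$ onto $H_N'$. Then the following are equivalent: (a) $\mathcal B_N$ is a frame of $H$; (b) the set $\{p_N'(w_1),\dots,p_N'(w_N)\}$ spans $H_N'$; (c) the set $\{p_N'(w_1),\dots,p_N'(w_N)\}$ is linearly independent; (d) $\mathcal B_N$ is a Riesz sequence in $H$; (e) $\mathcal B_N$ is a Riesz basis of $H$.
   Context: A sequence $\{u_j\}$ in $H$ is a frame if there are constants $0<A\le B<\infty$ with $A\|f\|^2\le\sum_j|\langle f,u_j\rangle|^2\le B\|f\|^2$ for all $f\in H$. It is a Riesz sequence if there are constants $0<A\le B<\infty$ with $A\sum_{j\in J}|a_j|^2\le\|\sum_{j\in J}a_ju_j\|^2\le B\sum_{j\in J}|a_j|^2$ for every finite set of coefficients $\{a_j\}_{j\in J}\subset\mathbb C$. A Riesz basis is a sequence that is both a frame and a Riesz sequence. *)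

From HB Require Import structures.
From mathcomp Require Import all_boot all_order all_algebra.
From mathcomp Require Import classical_sets reals constructive_ereal ereal
  topology normedtype sequences.
From mathcomp Require Import complex.
Set Implicit Arguments. Unset Strict Implicit. Unset Printing Implicit Defensive.
Import Order.TTheory GRing.Theory Num.Theory.
Local Open Scope ring_scope.

Section Hilbert.
Variable R : realType.
Variable H : lmodType R[i].
(* inner product: linear in the first argument, conjugate-linear in the second *)
Variable ip : H -> H -> R[i].

Definition hnorm (x : H) : R := Num.sqrt (complex.Re (ip x x)).

Record hilbert : Prop := Hilbert {
  ipDl : forall (a : R[i]) (x y z : H), ip (a *: x + y) z = a * ip x z + ip y z;
  ip_conj : forall x y : H, ip y x = conjc (ip x y);
  ip_ge0 : forall x : H, 0 <= complex.Re (ip x x);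
  ip_eq0 : forall x : H, ip x x = 0 -> x = 0;
  ip_complete : forall u : nat -> H,
    (forall e : R, 0 < e -> exists M, forall m n, (M <= m)%N -> (M <= n)%N ->
       hnorm (u m - u n) < e) ->
    exists l : H, forall e : R, 0 < e -> exists M, forall n, (M <= n)%N ->
       hnorm (u n - l) < e
}.

Definition separable : Prop :=
  exists d : nat -> H, forall (f : H) (e : R), 0 < e -> exists n, hnorm (f - d n) < e.

Definition orthonormal (v : nat -> H) : Prop :=
  forall i j, ip (v i) (v j) = (i == j)%:R.

Definition orthonormal_basis (v : nat -> H) : Prop :=
  orthonormal v /\ (forall f : H, (forall j, ip f (v j) = 0) -> f = 0).

Definition frame (u : nat -> H) : Prop :=
  exists A B : R, 0 < A /\ A <= B /\ forall f : H,
    ((A * hnorm f ^+ 2)%:E <= \sum_(j <oo) ((ComplexField.Normc.normc (ip f (u j)) ^+ 2)%:E)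
     <= (B * hnorm f ^+ 2)%:E)%E.

(* Riesz sequence: inequalities for every finite set J of indices (J given as
   a duplicate-free list) and every family of coefficients *)
Definition riesz_sequence (u : nat -> H) : Prop :=
  exists A B : R, 0 < A /\ A <= B /\ forall (J : seq nat) (a : nat -> R[i]),
    uniq J ->
    A * (\sum_(j <- J) ComplexField.Normc.normc (a j) ^+ 2) <= hnorm (\sum_(j <- J) a j *: u j) ^+ 2
    <= B * (\sum_(j <- J) ComplexField.Normc.normc (a j) ^+ 2).

Definition riesz_basis (u : nat -> H) : Prop := frame u /\ riesz_sequence u.

Definition spanN (v : nat -> H) (N : nat) : set H :=
  [set x | exists c : 'I_N -> R[i], x = \sum_(k < N) c k *: v k].

Definition is_orth_proj (S : set H) (p : H -> H) : Prop :=
  forall f : H, S (p f) /\ (forall g : H, S g -> ip (f - p f) g = 0).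

(* B_N = {w_j}_{j < N} ∪ {v_j}_{j >= N} (0-based indexing) *)
Definition BN (N : nat) (v w : nat -> H) : nat -> H :=
  fun j => if (j < N)%N then w j else v j.

End Hilbert.

From Pilot Require Import Defs.
From HB Require Import structures.
From mathcomp Require Import all_boot all_order all_algebra.
From mathcomp Require Import classical_sets reals constructive_ereal ereal
  topology normedtype sequences.
From mathcomp Require Import complex.
From mathcomp Require Import ring lra.
Set Implicit Arguments. Unset Strict Implicit. Unset Printing Implicit Defensive.
Import Order.TTheory GRing.Theory Num.Theory numFieldNormedType.Exports.
Local Open Scope ring_scope.

(* The matrix [A = (<w_k, v_i>)_(k, i < N)] holds the coordinates of the [p w_k]
   along [v_0, ..., v_(N-1)], so (b) and (c) both say that [A] is invertible.
   A combination of [B_N] splits into a combination of the [w_k] plus an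
   orthogonal tail along the [v_j], [j >= N]; dually, by Parseval's identity,
   [sum_j |<f, b_j>|^2 = sum_(k < N) |<f, w_k>|^2 + |f - p f|^2]. The upper frame
   and Riesz bounds hold for any unit vectors [w_k]. When [A] is invertible, the
   coordinates along [v_0, ..., v_(N-1)] are recovered through [invmx A], which
   gives the lower bounds. When [A] is singular, a kernel vector gives either a
   nonzero vector orthogonal to all of [B_N], contradicting the lower frame bound,
   or a nontrivial [y = sum_k c_k w_k] orthogonal to [v_0, ..., v_(N-1)]: the
   Fourier remainders of [y] are then combinations of [B_N] with coefficients [c]
   on the [w_k] and norms tending to 0, contradicting the lower Riesz bound. *)

Lemma sqr_le_sqrtr (R : rcfType) (x T : R) : 0 <= x -> x ^+ 2 <= T -> x <= Num.sqrt T.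
Proof. by move=> x_ge0 le_xT; rewrite -(ger0_norm x_ge0) -sqrtr_sqr ler_wsqrtr. Qed.

Lemma ler_sum_ord_const (R : numDomainType) n (F : 'I_n -> R) (M : R) :
  (forall i, F i <= M) -> \sum_i F i <= n%:R * M.
Proof.
move=> le_FM; apply: le_trans (ler_sum _ (fun i _ => le_FM i)) _.
by rewrite sumr_const card_ord mulr_natl.
Qed.

Lemma sum_seq_lt_ord (V : nmodType) (J : seq nat) (N : nat) (F : nat -> V) :
  uniq J -> \sum_(j <- J | (j < N)%N) F j = \sum_(k < N) (if (k : nat) \in J then F k else 0).
Proof.
move=> J_uniq; rewrite -(big_mkord xpredT (fun k => if k \in J then F k else 0)).
rewrite -big_mkcond -[LHS]big_filter -[RHS]big_filter; apply: perm_big.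
apply: uniq_perm; rewrite ?filter_uniq ?iota_uniq // => j.
by rewrite !mem_filter mem_iota /= subn0 add0n andbC.
Qed.

Section ComplexModulus.
Variable R : realType.
Local Notation normc := (@ComplexField.Normc.normc R).
Implicit Types z : R[i].

Lemma normc_ge0 z : 0 <= normc z.
Proof. by case: z => a b; rewrite /= sqrtr_ge0. Qed.

Lemma sqr_normcC z : (normc z ^+ 2)%:C%C = z * conjc z.
Proof.
case: z => a b /=; rewrite sqr_sqrtr ?addr_ge0 ?sqr_ge0 //.
by apply/eqP; rewrite eq_complex /=; apply/andP; split; apply/eqP; ring.
Qed.

Lemma normc_conj z : normc (conjc z) = normc z.
Proof. by case: z => a b /=; rewrite sqrrN. Qed.

Lemma Re_le_normc z : complex.Re z <= normc z.
Proof.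
case: z => a b /=; have [a0|a0] := leP a 0; first by rewrite (le_trans a0) ?sqrtr_ge0.
rewrite -(@ler_pXn2r _ 2) //= ?nnegrE ?sqrtr_ge0 ?(ltW a0) //.
by rewrite sqr_sqrtr ?addr_ge0 ?sqr_ge0 // lerDl sqr_ge0.
Qed.

Lemma normc_sum (I : Type) (r : seq I) (P : pred I) (F : I -> R[i]) :
  normc (\sum_(i <- r | P i) F i) <= \sum_(i <- r | P i) normc (F i).
Proof.
elim/big_rec2: _ => [|i y1 y2 _ h]; first by rewrite ComplexField.Normc.normc0.
exact: le_trans (le_normcD _ _) (lerD (lexx _) h).
Qed.

(* The coordinates of [u] are those of [u *m M] times [invmx M]. *)
Lemma unitmx_coord_bound n (M : 'M[R[i]]_n) : M \in unitmx ->
  exists2 C : R, 0 <= C & forall (u : 'rV_n) (t : R),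
    (forall j, normc ((u *m M) 0 j) <= t) -> forall i, normc (u 0 i) <= C * t.
Proof.
move=> uM; pose c i := \sum_j normc (invmx M j i).
have c_ge0 i : 0 <= c i by apply: sumr_ge0 => j _; apply: normc_ge0.
exists (\sum_i c i); first exact: sumr_ge0.
move=> u t ht i; have t_ge0 : 0 <= t := le_trans (normc_ge0 _) (ht i).
have -> : u 0 i = \sum_j (u *m M) 0 j * invmx M j i.
  by rewrite -[in LHS](mulmxK uM u) mxE.
apply: (le_trans (normc_sum _ _ _)); apply: (@le_trans _ _ (c i * t)).
  rewrite /c mulr_suml; apply: ler_sum => j _.
  by rewrite ComplexField.Normc.normcM mulrC ler_wpM2l ?normc_ge0.
rewrite ler_wpM2r // (bigD1 i) //= lerDl.
by apply: sumr_ge0 => j _; apply: c_ge0.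
Qed.

End ComplexModulus.

Section InnerProduct.
Variables (R : realType) (H : lmodType R[i]) (ip : H -> H -> R[i]).
Hypothesis hH : hilbert ip.
Local Notation normc := (@ComplexField.Normc.normc R).
Local Notation hnorm := (hnorm ip).
Implicit Types (x y z : H) (a : R[i]).

Lemma ip0l y : ip 0 y = 0.
Proof.
have := ipDl hH 1 0 0 y; rewrite scale1r addr0 mul1r => h.
by apply: (addrI (ip 0 y)); rewrite addr0 -h.
Qed.

Lemma ipZl a x y : ip (a *: x) y = a * ip x y.
Proof. by have := ipDl hH a x 0 y; rewrite addr0 ip0l addr0. Qed.

Lemma ip_addl x y z : ip (x + y) z = ip x z + ip y z.
Proof. by have := ipDl hH 1 x y z; rewrite scale1r mul1r. Qed.

Lemma ipBl x y z : ip (x - y) z = ip x z - ip y z.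
Proof. by rewrite ip_addl -scaleN1r ipZl mulN1r. Qed.

Lemma ip_suml (I : Type) (r : seq I) (P : pred I) (F : I -> H) y :
  ip (\sum_(i <- r | P i) F i) y = \sum_(i <- r | P i) ip (F i) y.
Proof. by elim/big_rec2: _ => [|i a b _ <-]; rewrite ?ip0l ?ip_addl. Qed.

Lemma ipC x y : ip x y = conjc (ip y x).
Proof. exact: ip_conj. Qed.

Lemma ip0r y : ip y 0 = 0.
Proof. by rewrite ipC ip0l rmorph0. Qed.

Lemma ipZr a x y : ip x (a *: y) = conjc a * ip x y.
Proof. by rewrite ipC ipZl rmorphM /= -ipC. Qed.

Lemma ip_addr x y z : ip x (y + z) = ip x y + ip x z.
Proof. by rewrite [LHS]ipC ip_addl rmorphD /= -!ipC. Qed.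

Lemma ipBr x y z : ip x (y - z) = ip x y - ip x z.
Proof. by rewrite ipC ipBl rmorphB /= -!ipC. Qed.

Lemma ip_sumr (I : Type) (r : seq I) (P : pred I) (F : I -> H) y :
  ip y (\sum_(i <- r | P i) F i) = \sum_(i <- r | P i) ip y (F i).
Proof. by rewrite [LHS]ipC ip_suml rmorph_sum; apply: eq_bigr => i _ /=; rewrite -ipC. Qed.

Lemma hnorm_ge0 x : 0 <= hnorm x.
Proof. exact: sqrtr_ge0. Qed.

Lemma ip_self x : ip x x = (hnorm x ^+ 2)%:C%C.
Proof.
rewrite sqr_sqrtr ?(ip_ge0 hH) //; have := ip_conj hH x x.
case: (ip x x) => a b [] /eqP; rewrite -subr_eq0 opprK -mulr2n mulrn_eq0 /=.
by move=> /eqP ->.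
Qed.

Lemma hnorm_eq0 x : hnorm x = 0 -> x = 0.
Proof. by move=> h; apply: (ip_eq0 hH); rewrite ip_self h expr0n. Qed.

Lemma hnorm0 : hnorm 0 = 0.
Proof. by rewrite /Defs.hnorm ip0l sqrtr0. Qed.

Lemma hnormZ a x : hnorm (a *: x) = normc a * hnorm x.
Proof.
rewrite /Defs.hnorm ipZl ipZr mulrA -sqr_normcC ip_self -rmorphM /=.
by rewrite sqrtrM ?sqr_ge0 // !sqrtr_sqr !ger0_norm ?normc_ge0 ?hnorm_ge0.
Qed.

Lemma hnorm_opp x : hnorm (- x) = hnorm x.
Proof. by rewrite -scaleN1r hnormZ normcN ComplexField.Normc.normc1 mul1r. Qed.

Lemma hdistC x y : hnorm (x - y) = hnorm (y - x).
Proof. by rewrite -hnorm_opp opprB. Qed.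

(* Expand [0 <= <z, z>] for [z = |y|^2 x - <x, y> y]. *)
Lemma cauchy_schwarz x y : normc (ip x y) <= hnorm x * hnorm y.
Proof.
have [y0|y_neq0] := eqVneq (hnorm y) 0.
  by rewrite y0 mulr0 (hnorm_eq0 y0) ip0r ComplexField.Normc.normc0.
set a := ip x y; set n := hnorm y ^+ 2.
have n_gt0 : 0 < n by rewrite exprn_gt0 // lt0r y_neq0 hnorm_ge0.
pose z := n%:C%C *: x - a *: y.
have : ip z z = n%:C%C * (n%:C%C * (hnorm x ^+ 2)%:C%C - (normc a ^+ 2)%:C%C).
  rewrite /z !ipBl !ipBr !ipZl !ipZr -/a (ipC y x) -/a (ip_self y) -/n.
  by rewrite (ip_self x) conjc_real sqr_normcC; ring.
rewrite ip_self -!rmorphM -rmorphB => -[e _].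
rewrite mul0r subr0 in e.
have : 0 <= n * (n * hnorm x ^+ 2 - normc a ^+ 2) by rewrite -e sqr_ge0.
rewrite pmulr_rge0 // subr_ge0 => h.
rewrite -(@ler_pXn2r _ 2) //= ?nnegrE ?normc_ge0 ?mulr_ge0 ?hnorm_ge0 //.
by rewrite exprMn -/n mulrC.
Qed.

Lemma ler_hnormD x y : hnorm (x + y) <= hnorm x + hnorm y.
Proof.
rewrite -(@ler_pXn2r _ 2) //= ?nnegrE ?addr_ge0 ?hnorm_ge0 //.
have -> : hnorm (x + y) ^+ 2 = hnorm x ^+ 2 + hnorm y ^+ 2 + 2 * complex.Re (ip x y).
  have := ip_self (x + y); rewrite !ip_addl -!addrA !ip_addr.
  by rewrite (ipC y x) !ip_self; case: (ip x y) => a b [<- _] /=; ring.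
rewrite sqrrD; have := le_trans (Re_le_normc (ip x y)) (cauchy_schwarz x y).
rewrite mulr2n; lra.
Qed.

Lemma ler_hnorm_sum (I : Type) (r : seq I) (P : pred I) (F : I -> H) :
  hnorm (\sum_(i <- r | P i) F i) <= \sum_(i <- r | P i) hnorm (F i).
Proof.
elim/big_rec2: _ => [|i a b _ h]; first by rewrite hnorm0.
exact: le_trans (ler_hnormD _ _) (lerD (lexx _) h).
Qed.

Lemma frame_orth_eq0 (u : nat -> H) x :
  frame ip u -> (forall j, ip x (u j) = 0) -> x = 0.
Proof.
move=> [a [B [a_gt0 [_ hF]]]] xu0; apply: hnorm_eq0.
have /andP[+ _] := hF x; rewrite (_ : (\sum_(j <oo) _)%E = 0%E); last first.
  by rewrite eseries0 // => j _ _; rewrite xu0 ComplexField.Normc.normc0 expr0n.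
rewrite lee_fin pmulr_rle0 // => x_le0.
by apply/eqP; rewrite -sqrf_eq0 eq_le x_le0 sqr_ge0.
Qed.

End InnerProduct.

Section OrthonormalSystem.
Variables (R : realType) (H : lmodType R[i]) (ip : H -> H -> R[i]).
Hypothesis hH : hilbert ip.
Variable v : nat -> H.
Hypothesis v_orth : Defs.orthonormal ip v.
Hypothesis v_total : forall f, (forall j, ip f (v j) = 0) -> f = 0.
Local Notation normc := (@ComplexField.Normc.normc R).
Local Notation hnorm := (hnorm ip).
Implicit Types (f : H) (r : seq nat) (P : pred nat) (a : nat -> R[i]).

Lemma ip_orth_comb r P a j : uniq r ->
  ip (\sum_(i <- r | P i) a i *: v i) (v j) = if (j \in r) && P j then a j else 0.
Proof.
move=> r_uniq; rewrite (ip_suml hH) big_mkcond /=.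
under eq_bigr => i _ do rewrite (ipZl hH) v_orth.
case jr: (j \in r) => /=.
  rewrite (bigD1_seq j) //= eqxx mulr1 big1 ?addr0 // => i /negPf ij.
  by rewrite ij mulr0 if_same.
rewrite big1_seq // => i /andP[_ ir]; have -> : (i == j) = false.
  by apply: contraTF ir => /eqP ->; rewrite jr.
by rewrite mulr0 if_same.
Qed.

Lemma pythagoras r P a : uniq r ->
  hnorm (\sum_(i <- r | P i) a i *: v i) ^+ 2 = \sum_(i <- r | P i) normc (a i) ^+ 2.
Proof.
move=> r_uniq; have := ip_self hH (\sum_(i <- r | P i) a i *: v i).
rewrite (ip_suml hH) big_seq_cond => /esym.
under eq_bigr => i /andP[ir Pi] do
  rewrite (ipZl hH) (ipC hH) ip_orth_comb // ir Pi -sqr_normcC.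
by rewrite -big_seq_cond -rmorph_sum => -[].
Qed.

Lemma hnorm_v j : hnorm (v j) = 1.
Proof. by rewrite /Defs.hnorm v_orth eqxx sqrtr1. Qed.

Definition fourier_sum f n := \sum_(0 <= j < n) ip f (v j) *: v j.
Definition bessel_sum f n := \sum_(0 <= j < n) normc (ip f (v j)) ^+ 2.

Lemma bessel_sum_ge0 f n : 0 <= bessel_sum f n.
Proof. by apply: sumr_ge0 => j _; rewrite sqr_ge0. Qed.

Lemma bessel_sum_homo f : {homo bessel_sum f : m n / (m <= n)%N >-> m <= n}.
Proof.
move=> m n mn; rewrite /bessel_sum (big_cat_nat (leq0n m) mn) /= lerDl.
by apply: sumr_ge0 => j _; rewrite sqr_ge0.
Qed.

Lemma bessel_identity f n :
  hnorm (f - fourier_sum f n) ^+ 2 = hnorm f ^+ 2 - bessel_sum f n.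
Proof.
have ip_f_sum : ip f (fourier_sum f n) = (bessel_sum f n)%:C%C.
  rewrite (ip_sumr hH) rmorph_sum; apply: eq_bigr => j _.
  by rewrite /= (ipZr hH) sqr_normcC mulrC.
have ip_sum_sum : ip (fourier_sum f n) (fourier_sum f n) = (bessel_sum f n)%:C%C.
  by rewrite (ip_self hH) pythagoras ?iota_uniq.
have : ip (f - fourier_sum f n) (f - fourier_sum f n) =
    (hnorm f ^+ 2 - bessel_sum f n)%:C%C.
  rewrite (ipBl hH) !(ipBr hH) ip_f_sum ip_sum_sum (ipC hH (fourier_sum f n)).
  by rewrite ip_f_sum conjc_real (ip_self hH f) rmorphB; ring.
by rewrite (ip_self hH) => -[].
Qed.

Lemma bessel_sum_le f n : bessel_sum f n <= hnorm f ^+ 2.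
Proof. by rewrite -subr_ge0 -bessel_identity sqr_ge0. Qed.

Lemma fourier_sum_sub f m n : (n <= m)%N ->
  hnorm (fourier_sum f m - fourier_sum f n) ^+ 2 = bessel_sum f m - bessel_sum f n.
Proof.
have addKl (V : zmodType) (a b : V) : a + b - a = b by rewrite addrC addKr.
move=> nm; rewrite /fourier_sum /bessel_sum !(big_cat_nat (leq0n n) nm) /= !addKl.
by rewrite pythagoras // iota_uniq.
Qed.

(* The Bessel sums increase to their supremum, and the squared distances
   between Fourier sums are differences of Bessel sums. *)
Lemma fourier_sum_cauchy f e : 0 < e -> exists M, forall m n,
  (M <= m)%N -> (M <= n)%N -> hnorm (fourier_sum f m - fourier_sum f n) < e.
Proof.
move=> e_gt0; pose E := range (bessel_sum f).
have E_sup : has_sup E.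
  split; first by exists (bessel_sum f 0), 0.
  by exists (hnorm f ^+ 2) => _ [n _ <-]; apply: bessel_sum_le.
have [_ [M _ <-] hM] := sup_adherent (mulr_gt0 e_gt0 e_gt0) E_sup.
exists M => m n Mm Mn; wlog nm : m n Mm Mn / (n <= m)%N.
  move=> W; have [nm|mn] := leqP n m; first exact: W.
  by rewrite (hdistC hH); apply: W => //; apply: ltnW.
rewrite -(@ltr_pXn2r _ 2) //= ?nnegrE ?hnorm_ge0 ?(ltW e_gt0) // fourier_sum_sub //.
have := sup_upper_bound E_sup (ex_intro2 _ _ m I erefl : E (bessel_sum f m)).
have := bessel_sum_homo f Mn; rewrite expr2; lra.
Qed.

Lemma fourier_sum_cvg f e : 0 < e ->
  exists M, forall n, (M <= n)%N -> hnorm (f - fourier_sum f n) ^+ 2 < e.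
Proof.
move=> e_gt0; have [l hl] := ip_complete hH (fourier_sum_cauchy f).
have fl : f = l.
  apply/eqP; rewrite -subr_eq0; apply/eqP/v_total => j.
  apply: ComplexField.Normc.eq0_normc; apply/eqP; rewrite eq_le normc_ge0 andbT.
  apply/ler_addgt0Pr => d d_gt0; rewrite add0r; have [M hM] := hl d d_gt0.
  pose n := maxn M j.+1; have := hM n (leq_maxl _ _).
  have -> : f - l = (f - fourier_sum f n) + (fourier_sum f n - l) by rewrite addrA subrK.
  rewrite (ip_addl hH) (ipBl hH) {1}/fourier_sum ip_orth_comb ?iota_uniq //.
  rewrite mem_iota /= add0n subn0 andbT (leq_trans (ltnSn j) (leq_maxr _ _)) subrr add0r.
  move=> /ltW; apply: le_trans.
  by apply: le_trans (cauchy_schwarz hH _ _) _; rewrite hnorm_v mulr1.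
have /hl[M hM] : 0 < Num.sqrt e by rewrite sqrtr_gt0.
exists M => n /hM h.
rewrite -(sqr_sqrtr (ltW e_gt0)) ltr_pXn2r ?nnegrE ?hnorm_ge0 ?sqrtr_ge0 //.
by rewrite {1}fl (hdistC hH).
Qed.

Lemma parseval f : (bessel_sum f n @[n --> \oo] --> hnorm f ^+ 2)%classic.
Proof.
apply/cvgrPdist_lt => e e_gt0; have [M hM] := fourier_sum_cvg f e_gt0.
exists M => // n /hM; rewrite bessel_identity ger0_norm // subr_ge0.
exact: bessel_sum_le.
Qed.

End OrthonormalSystem.

Section ModifiedBasis.
Variables (R : realType) (H : lmodType R[i]) (ip : H -> H -> R[i]).
Hypothesis hH : hilbert ip.
Variable v : nat -> H.
Hypothesis v_orth : Defs.orthonormal ip v.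
Hypothesis v_total : forall f, (forall j, ip f (v j) = 0) -> f = 0.
Variables (N : nat) (p : H -> H) (w : nat -> H).
Hypothesis hp : is_orth_proj ip (spanN v N) p.
Hypothesis w_unit : forall j, hnorm ip (w j) = 1.
Local Notation normc := (@ComplexField.Normc.normc R).
Local Notation hnorm := (hnorm ip).
Local Notation b := (BN N v w).
Implicit Types (f g x y : H) (d : 'I_N -> R[i]) (J : seq nat) (a : nat -> R[i]).

Lemma ip_spanN_comb d (i : 'I_N) : ip (\sum_(k < N) d k *: v k) (v i) = d i.
Proof.
rewrite (ip_suml hH) (bigD1 i) //= (ipZl hH) v_orth eqxx mulr1 big1 ?addr0 //.
by move=> k /negPf ki; rewrite (ipZl hH) v_orth -[(k : nat) == i]/(k == i) ki mulr0.
Qed.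

Lemma ip_spanN_comb_out d j : (N <= j)%N -> ip (\sum_(k < N) d k *: v k) (v j) = 0.
Proof.
move=> Nj; rewrite (ip_suml hH) big1 // => k _; rewrite (ipZl hH) v_orth.
by rewrite ltn_eqF ?mulr0 // (leq_trans (ltn_ord k) Nj).
Qed.

Lemma spanN_comb_eq0 d : \sum_(k < N) d k *: v k = 0 -> forall k, d k = 0.
Proof. by move=> d0 k; rewrite -ip_spanN_comb d0 (ip0l hH). Qed.

Lemma spanN_coordE x : spanN v N x -> x = \sum_(i < N) ip x (v i) *: v i.
Proof. by move=> [d ->]; apply: eq_bigr => i _; rewrite ip_spanN_comb. Qed.

Lemma spanN_v (i : 'I_N) : spanN v N (v i).
Proof.
exists (fun k => (k == i)%:R); rewrite (bigD1 i) //= eqxx scale1r big1 ?addr0 //.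
by move=> k /negPf ->; rewrite scale0r.
Qed.

Lemma ip_proj_v f (i : 'I_N) : ip (p f) (v i) = ip f (v i).
Proof.
by apply/eqP; rewrite eq_sym -subr_eq0 -(ipBl hH) (hp f).2 //; apply: spanN_v.
Qed.

Lemma projE f : p f = fourier_sum ip v f N.
Proof.
rewrite (spanN_coordE (hp f).1) /fourier_sum big_mkord.
by apply: eq_bigr => i _; rewrite ip_proj_v.
Qed.

Lemma ip_proj_sym f g : ip f (p g) = ip (p f) g.
Proof.
have ip_pp h k : ip (h - p h) (p k) = 0 := (hp h).2 _ (hp k).1.
have /eqP := ip_pp f g; rewrite (ipBl hH) subr_eq0 => /eqP ->.
have /eqP := ip_pp g f; rewrite (ipBl hH) subr_eq0 (ipC hH g) (ipC hH (p g)).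
by move=> /eqP/(congr1 conjc); rewrite !conjcK.
Qed.

(* Row [k] holds the coordinates of [p (w k)] along [v_0, ..., v_(N-1)]. *)
Definition proj_coord_mx : 'M[R[i]]_N := \matrix_(k, i) ip (w k) (v i).
Local Notation A := proj_coord_mx.

Lemma comb_proj_w (c : 'I_N -> R[i]) :
  \sum_(k < N) c k *: p (w k) = \sum_(i < N) (\row_k c k *m A) 0 i *: v i.
Proof.
under eq_bigr => k _ do rewrite (spanN_coordE (hp (w k)).1) scaler_sumr.
rewrite exchange_big /=; apply: eq_bigr => i _; rewrite !mxE scaler_suml.
by apply: eq_bigr => k _; rewrite scalerA !mxE ip_proj_v.
Qed.

Lemma spanN_proj_w_unitmx : (forall x, spanN v N x ->
  exists c : 'I_N -> R[i], x = \sum_(k < N) c k *: p (w k)) <-> A \in unitmx.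
Proof.
split=> [span_pw | uA x /spanN_coordE ->].
  have /boolp.choice[C hC] (i : 'I_N) :
      exists c : 'I_N -> R[i], v i = \sum_(k < N) c k *: p (w k).
    exact: span_pw (spanN_v i).
  rewrite -row_full_unit; apply/row_fullP; exists (\matrix_(i, k) C i k).
  apply/matrixP => i j; rewrite !mxE -[i == j]/(i == j :> nat) -v_orth.
  rewrite [v i]hC comb_proj_w ip_spanN_comb mxE.
  by apply: eq_bigr => k _; rewrite !mxE.
pose d : 'rV_N := \row_i ip x (v i).
exists (fun k => (d *m invmx A) 0 k); rewrite comb_proj_w.
have -> : \row_k (d *m invmx A) 0 k = d *m invmx A by apply/rowP => k; rewrite mxE.
by rewrite mulmxKV //; apply: eq_bigr => i _; rewrite mxE.
Qed.

Lemma free_proj_w_unitmx : (forall c : 'I_N -> R[i],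
  \sum_(k < N) c k *: p (w k) = 0 -> forall k, c k = 0) <-> A \in unitmx.
Proof.
split=> [free_pw | uA c].
  rewrite -row_free_unit; apply: inj_row_free => u uA0; apply/rowP => k.
  rewrite mxE; apply: free_pw; rewrite comb_proj_w big1 // => i _.
  have -> : \row_k u 0 k = u by apply/rowP => l; rewrite mxE.
  by rewrite uA0 mxE scale0r.
rewrite comb_proj_w => /spanN_comb_eq0 cA0 k.
have /eqP : \row_k c k *m A = 0 by apply/rowP => i; rewrite cA0 mxE.
by rewrite mulmx_free_eq0 ?row_free_unit // => /eqP/rowP/(_ k); rewrite !mxE.
Qed.

Lemma frame_BN_unitmx : frame ip b -> A \in unitmx.
Proof.
move=> frame_b; rewrite -unitmx_tr -row_free_unit; apply: inj_row_free => r rA0.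
pose x := \sum_(i < N) conjc (r 0 i) *: v i.
suff /spanN_comb_eq0 x0 : x = 0.
  by apply/rowP => i; apply/eqP; rewrite mxE -conjc_eq0 x0.
apply: (frame_orth_eq0 hH frame_b) => j; rewrite /BN; case: ltnP => jN; last first.
  by rewrite /x ip_spanN_comb_out.
have := congr1 (fun M : 'rV_N => conjc (M 0 (Ordinal jN))) rA0; rewrite !mxE rmorph0 rmorph_sum.
move=> <-; rewrite (ip_suml hH); apply: eq_bigr => i _.
by rewrite (ipZl hH) (ipC hH (v i)) !mxE rmorphM.
Qed.

(* [y] has no component along [v_0, ..., v_(N-1)], so [y] minus its Fourier sums
   is a combination of [B_N] with coefficients [u] on the [w_k], whose norm tends
   to zero. *)
Lemma riesz_BN_unitmx : riesz_sequence ip b -> A \in unitmx.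
Proof.
move=> [a0 [B [a0_gt0 [_ hR]]]]; rewrite -row_free_unit; apply: inj_row_free => u uA0.
pose y := \sum_(k < N) u 0 k *: w k.
have y_v (i : 'I_N) : ip y (v i) = 0.
  have := congr1 (fun M : 'rV_N => M 0 i) uA0; rewrite !mxE => <-.
  by rewrite /y (ip_suml hH); apply: eq_bigr => k _; rewrite (ipZl hH) mxE.
pose gam := \sum_(k < N) normc (u 0 k) ^+ 2.
have gam_ge0 : 0 <= gam by apply: sumr_ge0 => k _; apply: sqr_ge0.
have : a0 * gam <= 0.
  apply/ler_addgt0Pr => e e_gt0; rewrite add0r.
  have [M hM] := fourier_sum_cvg hH v_orth v_total y e_gt0.
  pose n := maxn M N; have Nn : (N <= n)%N := leq_maxr M N.
  pose a j := if (j < N)%N then oapp (u 0) 0 (insub j) else - ip y (v j).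
  have yn : y - fourier_sum ip v y n = \sum_(0 <= j < n) a j *: b j.
    rewrite /fourier_sum !(big_cat_nat (leq0n N) Nn) /= big_mkord big1 ?add0r.
      congr (_ + _); first by rewrite big_mkord; apply: eq_bigr => k _; rewrite /a /BN ltn_ord valK.
      rewrite -sumrN !big_nat; apply: eq_bigr => j /andP[Nj _].
      by rewrite /a /BN ltnNge Nj scaleNr.
    by move=> i _; rewrite y_v scale0r.
  have gam_le : gam <= \sum_(0 <= j < n) normc (a j) ^+ 2.
    rewrite (big_cat_nat (leq0n N) Nn) /= big_mkord.
    have -> : \sum_(k < N) normc (a k) ^+ 2 = gam.
      by apply: eq_bigr => k _; rewrite /a /= ltn_ord valK.
    by rewrite lerDl; apply: sumr_ge0 => j _; apply: sqr_ge0.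
  have /andP[+ _] := hR (index_iota 0 n) a (iota_uniq _ _).
  rewrite -yn => /(le_trans (ler_wpM2l (ltW a0_gt0) gam_le)) /le_lt_trans/(_ (hM n (leq_maxl _ _))).
  exact: ltW.
rewrite pmulr_rle0 // => gam_le0; apply/rowP => k; rewrite mxE.
apply: ComplexField.Normc.eq0_normc; apply/eqP; rewrite -sqrf_eq0; apply/eqP.
apply: (psumr_eq0P (P := xpredT) (F := fun l => normc (u 0 l) ^+ 2)) => // [l _|].
  exact: sqr_ge0.
by apply/eqP; rewrite eq_le gam_le0 gam_ge0.
Qed.

Definition head_coef J a (k : 'I_N) := if (k : nat) \in J then a k else 0.
Definition tail_comb J a := \sum_(j <- J | ~~ (j < N)%N) a j *: v j.

Lemma BN_comb_split J a : uniq J ->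
  \sum_(j <- J) a j *: b j = \sum_(k < N) head_coef J a k *: w k + tail_comb J a.
Proof.
move=> J_uniq; rewrite (bigID (fun j => (j < N)%N)) /= sum_seq_lt_ord //; congr (_ + _).
  by apply: eq_bigr => k _; rewrite /BN ltn_ord /head_coef; case: ifP; rewrite ?scale0r.
by apply: eq_bigr => j /negbTE jN; rewrite /BN jN.
Qed.

Lemma BN_sqsum_split J a : uniq J ->
  \sum_(j <- J) normc (a j) ^+ 2 =
    \sum_(k < N) normc (head_coef J a k) ^+ 2 + hnorm (tail_comb J a) ^+ 2.
Proof.
move=> J_uniq; rewrite (bigID (fun j => (j < N)%N)) /= sum_seq_lt_ord //.
rewrite (pythagoras hH v_orth) //; congr (_ + _); apply: eq_bigr => k _.
by rewrite /head_coef; case: ifP; rewrite ?ComplexField.Normc.normc0 ?expr0n.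
Qed.

Lemma BN_comb_le J a : uniq J ->
  hnorm (\sum_(j <- J) a j *: b j) ^+ 2 <= (N%:R + 1) ^+ 2 * \sum_(j <- J) normc (a j) ^+ 2.
Proof.
move=> J_uniq; rewrite BN_comb_split // BN_sqsum_split //.
set S := (X in _ <= _ * X); have S_ge0 : 0 <= S.
  by rewrite addr_ge0 ?sqr_ge0 ?sumr_ge0 // => k _; apply: sqr_ge0.
have head_le k : normc (head_coef J a k) <= Num.sqrt S.
  apply: sqr_le_sqrtr; first exact: normc_ge0.
  rewrite /S (bigD1 k) //= -addrA lerDl addr_ge0 ?sqr_ge0 //.
  by apply: sumr_ge0 => l _; apply: sqr_ge0.
have tail_le : hnorm (tail_comb J a) <= Num.sqrt S.
  by apply: sqr_le_sqrtr; rewrite ?hnorm_ge0 // lerDr sumr_ge0 // => k _; apply: sqr_ge0.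
rewrite -(sqr_sqrtr S_ge0) -exprMn ler_pXn2r ?nnegrE ?hnorm_ge0 ?mulr_ge0 ?sqrtr_ge0 //.
apply: le_trans (ler_hnormD hH _ _) _; rewrite mulrDl mul1r lerD //.
apply: le_trans (ler_hnorm_sum hH _ _ _) _; apply: ler_sum_ord_const => k.
by rewrite (hnormZ hH) w_unit mulr1.
Qed.

Lemma ip_BN_comb_v J a (i : 'I_N) : uniq J ->
  ip (\sum_(j <- J) a j *: b j) (v i) = (\row_k head_coef J a k *m A) 0 i.
Proof.
move=> J_uniq; rewrite BN_comb_split // (ip_addl hH) (ip_orth_comb hH v_orth) //.
rewrite ltn_ord andbF addr0 (ip_suml hH) mxE; apply: eq_bigr => k _.
by rewrite (ipZl hH) !mxE.
Qed.

(* The coordinates of the [w]-part are controlled through [invmx A] by the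
   inner products with [v_0, ..., v_(N-1)]; the [v]-part is the rest. *)
Lemma BN_comb_ge : A \in unitmx -> exists2 K : R, 1 <= K & forall J a, uniq J ->
  \sum_(j <- J) normc (a j) ^+ 2 <= K * hnorm (\sum_(j <- J) a j *: b j) ^+ 2.
Proof.
move=> uA; have [C C_ge0 hC] := unitmx_coord_bound uA.
exists (N%:R * C ^+ 2 + (1 + N%:R * C) ^+ 2) => [|J a J_uniq].
  by have := ler0n R N; nra.
set y := \sum_(j <- J) a j *: b j; have y_ge0 := hnorm_ge0 ip y.
have head_le k : normc (head_coef J a k) <= C * hnorm y.
  have := hC (\row_k head_coef J a k) (hnorm y) _ k; rewrite mxE; apply => i.
  rewrite -ip_BN_comb_v //; apply: le_trans (cauchy_schwarz hH _ _) _.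
  by rewrite (hnorm_v v_orth) mulr1.
have tail_le : hnorm (tail_comb J a) <= (1 + N%:R * C) * hnorm y.
  have -> : tail_comb J a = y - \sum_(k < N) head_coef J a k *: w k.
    by rewrite /y BN_comb_split // addrC addKr.
  apply: le_trans (ler_hnormD hH _ _) _; rewrite (hnorm_opp hH).
  suff : hnorm (\sum_(k < N) head_coef J a k *: w k) <= N%:R * (C * hnorm y) by lra.
  apply: le_trans (ler_hnorm_sum hH _ _ _) _; apply: ler_sum_ord_const => k.
  by rewrite (hnormZ hH) w_unit mulr1.
have head_sq : \sum_(k < N) normc (head_coef J a k) ^+ 2 <= N%:R * (C * hnorm y) ^+ 2.
  apply: ler_sum_ord_const => k.
  by rewrite ler_pXn2r ?nnegrE ?normc_ge0 ?mulr_ge0.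
have tail_sq : hnorm (tail_comb J a) ^+ 2 <= ((1 + N%:R * C) * hnorm y) ^+ 2.
  have NCy_ge0 : 0 <= (1 + N%:R * C) * hnorm y.
    by rewrite mulr_ge0 ?addr_ge0 ?mulr_ge0 ?ler0n.
  by rewrite ler_pXn2r ?nnegrE ?hnorm_ge0.
rewrite BN_sqsum_split //; move: head_sq tail_sq; rewrite !exprMn; nra.
Qed.

Lemma unitmx_riesz_BN : A \in unitmx -> riesz_sequence ip b.
Proof.
move=> /BN_comb_ge[K K_ge1 hK]; have K_gt0 : 0 < K := lt_le_trans ltr01 K_ge1.
exists K^-1, ((N%:R + 1) ^+ 2); split; [|split].
- by rewrite invr_gt0.
- apply: (@le_trans _ _ 1); first by rewrite invf_le1.
  by have := ler0n R N; nra.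
move=> J a J_uniq; rewrite BN_comb_le // andbT mulrC ler_pdivrMr // mulrC.
exact: hK.
Qed.

Definition BN_sqsum f := \sum_(k < N) normc (ip f (w k)) ^+ 2 + hnorm (f - p f) ^+ 2.

(* Past [N], the partial sums of the series are those of Parseval's identity. *)
Lemma BN_series f :
  (\sum_(j <oo) (normc (ip f (b j)) ^+ 2)%:E)%E = (BN_sqsum f)%:E.
Proof.
pose S n := \sum_(0 <= j < n) normc (ip f (b j)) ^+ 2.
have S_tail n : (N <= n)%N -> S n = \sum_(k < N) normc (ip f (w k)) ^+ 2
                                    + (bessel_sum ip v f n - bessel_sum ip v f N).
  move=> Nn; rewrite /S /bessel_sum !(big_cat_nat (leq0n N) Nn) /= addrAC subrr add0r.
  congr (_ + _); first by rewrite big_mkord; apply: eq_bigr => k _; rewrite /BN ltn_ord.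
  by rewrite !big_nat; apply: eq_bigr => j /andP[Nj _]; rewrite /BN ltnNge Nj.
have cvgS : (S n @[n --> \oo] --> BN_sqsum f)%classic.
  rewrite /BN_sqsum projE (bessel_identity hH v_orth).
  apply: cvg_trans (cvgD (cvg_cst _) (cvgB (parseval hH v_orth v_total (f := f)) (cvg_cst _))).
  by apply: near_eq_cvg; exists N => // n /S_tail ->.
rewrite (_ : (fun n => _) = EFin \o S); last by apply/boolp.funext => n; rewrite /= sumEFin.
by rewrite EFin_lim ?(cvgP _ cvgS) // (cvg_lim _ cvgS).
Qed.

Lemma BN_sqsum_le f : BN_sqsum f <= (N%:R + 1) * hnorm f ^+ 2.
Proof.
rewrite /BN_sqsum mulrDl mul1r lerD //.
  apply: ler_sum_ord_const => k; rewrite ler_pXn2r ?nnegrE ?normc_ge0 ?hnorm_ge0 //.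
  by apply: le_trans (cauchy_schwarz hH _ _) _; rewrite w_unit mulr1.
by rewrite projE (bessel_identity hH v_orth) gerDl oppr_le0 bessel_sum_ge0.
Qed.

(* The coordinates [<f, v_i>], [i < N], are controlled through [invmx A] by the
   [<f, p w_k> = <p f, w_k>], which are at most [<f, w_k>] plus [|f - p f|]. *)
Lemma BN_sqsum_ge : A \in unitmx ->
  exists2 K : R, 1 <= K & forall f, hnorm f ^+ 2 <= K * BN_sqsum f.
Proof.
move=> uA; have /unitmx_coord_bound[C C_ge0 hC] : A^T \in unitmx by rewrite unitmx_tr.
exists (1 + 2 * N%:R * C ^+ 2) => [|f]; first by have := ler0n R N; nra.
pose g := f - p f; pose W := \sum_(k < N) normc (ip f (w k)) ^+ 2.
have W_ge0 : 0 <= W by apply: sumr_ge0 => k _; apply: sqr_ge0.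
pose t := Num.sqrt W + hnorm g.
have ip_pw_le (k : 'I_N) : normc (ip (p (w k)) f) <= t.
  rewrite (ipC hH) normc_conj ip_proj_sym.
  have -> : p f = f - g by rewrite /g opprB addrC subrK.
  rewrite (ipBl hH); apply: le_trans (le_normcD _ _) _; rewrite normcN lerD //.
    apply: sqr_le_sqrtr; first exact: normc_ge0.
    by rewrite /W (bigD1 k) //= lerDl sumr_ge0 // => l _; apply: sqr_ge0.
  by apply: le_trans (cauchy_schwarz hH _ _) _; rewrite w_unit mulr1.
have ip_v_le (i : 'I_N) : normc (ip f (v i)) <= C * t.
  rewrite (ipC hH) normc_conj.
  have := hC (\row_i ip (v i) f) t _ i; rewrite mxE; apply => k.
  have -> : (\row_i ip (v i) f *m A^T) 0 k = ip (p (w k)) f.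
    rewrite (spanN_coordE (hp (w k)).1) (ip_suml hH) mxE; apply: eq_bigr => l _.
    by rewrite (ipZl hH) ip_proj_v !mxE mulrC.
  exact: ip_pw_le.
have t_sq : t ^+ 2 <= 2 * (W + hnorm g ^+ 2).
  have := sqr_ge0 (Num.sqrt W - hnorm g); have := sqr_sqrtr W_ge0; rewrite /t; nra.
have bessel_le : bessel_sum ip v f N <= N%:R * C ^+ 2 * (2 * (W + hnorm g ^+ 2)).
  apply: (@le_trans _ _ (N%:R * (C * t) ^+ 2)).
    rewrite /bessel_sum big_mkord; apply: ler_sum_ord_const => i.
    by rewrite ler_pXn2r ?nnegrE ?normc_ge0 ?mulr_ge0 ?addr_ge0 ?sqrtr_ge0 ?hnorm_ge0 ?ip_v_le.
  by rewrite exprMn mulrA ler_wpM2l ?mulr_ge0 ?sqr_ge0 ?ler0n.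
have -> : hnorm f ^+ 2 = hnorm g ^+ 2 + bessel_sum ip v f N.
  by rewrite /g projE (bessel_identity hH v_orth) subrK.
by rewrite /BN_sqsum -/g -/W; move: bessel_le; have := sqr_ge0 (hnorm g); nra.
Qed.

Lemma unitmx_frame_BN : A \in unitmx -> frame ip b.
Proof.
move=> /BN_sqsum_ge[K K_ge1 hK]; have K_gt0 : 0 < K := lt_le_trans ltr01 K_ge1.
exists K^-1, (N%:R + 1); split; [|split].
- by rewrite invr_gt0.
- by apply: (@le_trans _ _ 1); rewrite ?invf_le1 // lerDr ler0n.
move=> f; rewrite BN_series !lee_fin BN_sqsum_le andbT mulrC ler_pdivrMr // mulrC.
exact: hK.
Qed.

End ModifiedBasis.

Theorem mainTheorem1 (R : realType) (H : lmodType R[i]) (ip : H -> H -> R[i])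
  (hH : hilbert ip) (sepH : separable ip)
  (v w : nat -> H) (hv : orthonormal_basis ip v)
  (hw : forall j, hnorm ip (w j) = 1)
  (N : nat) (hN : (1 <= N)%N)
  (p : H -> H) (hp : is_orth_proj ip (spanN v N) p) :
  [<-> frame ip (BN N v w);
       (forall x : H, spanN v N x ->
          exists c : 'I_N -> R[i], x = \sum_(k < N) c k *: p (w k));
       (forall c : 'I_N -> R[i], \sum_(k < N) c k *: p (w k) = 0 ->
          forall k, c k = 0);
       riesz_sequence ip (BN N v w);
       riesz_basis ip (BN N v w)].
Proof.
have [v_orth v_total] := hv.
tfae=> [frameB|spanB|freeB|rieszB|[]//].
- by apply/(spanN_proj_w_unitmx hH v_orth w hp); apply: frame_BN_unitmx frameB.
- by apply/(free_proj_w_unitmx hH v_orth w hp); apply/(spanN_proj_w_unitmx hH v_orth w hp).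
- by apply: (unitmx_riesz_BN hH v_orth hw); apply/(free_proj_w_unitmx hH v_orth w hp).
- split=> //; apply: (unitmx_frame_BN hH v_orth v_total hp hw).
  exact: riesz_BN_unitmx rieszB.
Qed.
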